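(* Let $(X,d_X)$ be a complete metric space. Suppose that $\mathfrak{A}=\{A(t)\}_{t\in\mathbb{R}}$ and $\mathfrak{A}_\infty=\{A_\infty(t)\}_{t\in\mathbb{R}}$ are pullback attractors of processes $U$ and $U_\infty$ on $X$, respectively. Assume that (i) $\mathfrak{A}$ is backwards bounded, i.e. there is a bounded set $B\subset X$ with $\bigcup_{t\leq0}A(t)\subset B$; (ii) $$\sup_{x\in B,\ \tau\in\mathbb{R}^+} d_X\big(U(t,t-\tau,x),U_\infty(t,t-\tau,x)\big)\to0\quad\text{as } t\to-\infty.$$ Then $\lim_{t\to-\infty}\operatorname{dist}\big(A(t),A_\infty(t)\big)=0$. If moreover $\bigcup_{t\leq0}A_\infty(t)\subset B$, then $\lim_{t\to-\infty}\operatorname{dist}_H\big(A(t),A_\infty(t)\big)=0$.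
   Context: A process on $X$ is a map $U:\{(t,\tau)\in\mathbb{R}^2:t\geq\tau\}\times X\to X$ with $U(\tau,\tau,x)=x$ and $U(t,s,U(s,\tau,x))=U(t,\tau,x)$ for all $t\geq s\geq\tau$, $x\in X$ (no continuity is assumed). A pullback attractor of $U$ is a family $\mathfrak{A}=\{A(t)\}_{t\in\mathbb{R}}$ of nonempty compact subsets of $X$ which is invariant ($U(t,\tau,A(\tau))=A(t)$ for all $t\geq\tau$), pullback attracts every nonempty bounded set $D\subset X$ (i.e. $\lim_{s\to\infty}\operatorname{dist}(U(t,t-s,D),A(t))=0$ for every $t\in\mathbb{R}$), and is minimal among families with these properties. Here $\operatorname{dist}(A,B)=\sup_{a\in A}\inf_{b\in B}d_X(a,b)$ is the Hausdorff semi-metric and $\operatorname{dist}_H(A,B)=\max\{\operatorname{dist}(A,B),\operatorname{dist}(B,A)\}$ the Hausdorff metric. *)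

From HB Require Import structures.
From mathcomp Require Import all_boot all_order all_algebra.
From mathcomp Require Import all_classical all_reals all_analysis.
Set Implicit Arguments. Unset Strict Implicit. Unset Printing Implicit Defensive.
Import Order.TTheory GRing.Theory Num.Theory.
Import numFieldNormedType.Exports.
Local Open Scope classical_set_scope.
Local Open Scope ring_scope.

Definition complete_space {R : realType} (X : metricType R) : Prop :=
  forall F : set_system X, ProperFilter F -> cauchy F -> exists x : X, F --> x.

Definition mbounded {R : realType} {X : metricType R} (D : set X) : Prop :=
  exists (x0 : X) (r : R), forall x, D x -> mdist x0 x <= r.

Definition hsdist {R : realType} {X : metricType R} (A B : set X) : \bar R :=
  ereal_sup [set ereal_inf [set (mdist a b)%:E | b in B] | a in A].

Definition hdist {R : realType} {X : metricType R} (A B : set X) : \bar R :=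
  maxe (hsdist A B) (hsdist B A).

(* a process: U t tau x, meaningful for t >= tau *)
Definition is_process {R : realType} {X : metricType R}
  (U : R -> R -> X -> X) : Prop :=
  (forall tau x, U tau tau x = x) /\
  (forall t s tau x, tau <= s -> s <= t -> U t s (U s tau x) = U t tau x).

Definition pullback_attracting_family {R : realType} {X : metricType R}
  (U : R -> R -> X -> X) (A : R -> set X) : Prop :=
  (forall t, A t !=set0 /\ compact (A t)) /\
  (forall t tau, tau <= t -> U t tau @` A tau = A t) /\
  (forall D : set X, D !=set0 -> mbounded D -> forall t : R,
     hsdist (U t (t - s) @` D) (A t) @[s --> +oo] --> 0%E).

Definition pullback_attractor {R : realType} {X : metricType R}
  (U : R -> R -> X -> X) (A : R -> set X) : Prop :=
  pullback_attracting_family U A /\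
  (forall C : R -> set X, pullback_attracting_family U C ->
     forall t, A t `<=` C t).

(* Fix t <= 0 and tau >= 0. By invariance A(t) is the image of A(t - tau)
   under U(t, t - tau), hence contained in U(t, t - tau) B. Moving every point
   of that image from U(t, t - tau) x to U_oo(t, t - tau) x costs at most the
   uniform gap of hypothesis (ii), so
     dist(A(t), A_oo(t)) <= dist(U_oo(t, t - tau) B, A_oo(t)) + gap(t),
   and the first term vanishes as tau -> +oo because A_oo pullback attracts
   the bounded set B. Letting t -> -oo makes the gap small. When A_oo is also
   backwards bounded by B, the same argument with the roles exchanged bounds
   the other semi-distance. *)
From mathcomp Require Import all_boot all_order all_algebra.
From mathcomp Require Import all_classical all_reals all_analysis.
From mathcomp Require Import lra.
Import Order.TTheory GRing.Theory Num.Theory.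
Import numFieldNormedType.Exports.
Local Open Scope classical_set_scope.
Local Open Scope ring_scope.

Section nonneg_cvge0.
Context {R : realType} {T : Type} {F : set_system T} {FF : Filter F}.

Lemma cvge0P {h : T -> \bar R} : (forall t, 0 <= h t)%E ->
  h @ F --> 0%E <-> forall e : R, 0 < e -> \forall t \near F, (h t <= e%:E)%E.
Proof.
move=> h0; split.
  move=> /fine_cvgP [hfin /cvgrPdist_le hc] e e0.
  apply: filterS2 hfin (hc e e0) => t ht /=.
  rewrite sub0r normrN => he; rewrite -(fineK ht) lee_fin.
  exact: le_trans (ler_norm _) he.
move=> he; apply/fine_cvgP; split.
  apply: filterS (he 1 ltr01) => t ht.
  by rewrite ge0_fin_numE // (le_lt_trans ht) // ltry.
apply/cvgrPdist_le => e e0; apply: filterS (he e e0) => t ht /=.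
rewrite sub0r normrN; move: (h0 t) ht; case: (h t) => [r| |] //=.
by rewrite !lee_fin => r0 re; rewrite ger0_norm.
Qed.

Lemma cvge0_max (f g : T -> \bar R) :
  (forall t, 0 <= f t)%E -> (forall t, 0 <= g t)%E ->
  f @ F --> 0%E -> g @ F --> 0%E -> maxe (f t) (g t) @[t --> F] --> 0%E.
Proof.
move=> f0 g0 /(cvge0P f0) fe /(cvge0P g0) ge.
apply/cvge0P => [t|e e0]; first by rewrite le_max f0.
by apply: filterS2 (fe e e0) (ge e e0) => t fte gte; rewrite ge_max fte gte.
Qed.

End nonneg_cvge0.

Section hausdorff_semidistance.
Context {R : realType} {X : metricType R}.

Lemma hsdist_ge0 (A C : set X) : A !=set0 -> (0 <= hsdist A C)%E.
Proof.
move=> [a Aa]; apply: le_trans (ereal_sup_ubound _); last by exists a.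
by apply: le_ereal_inf_tmp => _ [c _ <-]; rewrite lee_fin mdist_ge0.
Qed.

Lemma hsdistSl {A A' C : set X} : A `<=` A' -> (hsdist A C <= hsdist A' C)%E.
Proof.
move=> AA'; apply: ge_ereal_sup => _ [a Aa <-].
by apply: ereal_sup_ubound; exists a => //; apply: AA'.
Qed.

Lemma ereal_inf_mdist_le (x y : X) (C : set X) :
  (ereal_inf [set (mdist x c)%:E | c in C] <=
   (mdist x y)%:E + ereal_inf [set (mdist y c)%:E | c in C])%E.
Proof.
rewrite addeC -leeBlDr //; apply: le_ereal_inf_tmp => _ [c Cc <-].
rewrite leeBlDr //; apply: le_trans (ereal_inf_lbound _) _; first by exists c.
by rewrite -EFinD lee_fin addrC metric_triangle.
Qed.

Lemma le_hsdist_image (f g : X -> X) (D C : set X) (e : R) :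
  (forall x, D x -> mdist (f x) (g x) <= e) ->
  (hsdist (f @` D) C <= hsdist (g @` D) C + e%:E)%E.
Proof.
move=> fg; apply: ge_ereal_sup => _ [_ [x Dx <-] <-].
apply: le_trans (ereal_inf_mdist_le _ (g x) _) _.
rewrite addeC; apply: leeD; last by rewrite lee_fin fg.
by apply: ereal_sup_ubound; exists (g x) => //; exists x.
Qed.

End hausdorff_semidistance.

Section process_gap.
Context {R : realType} {X : metricType R}.
Implicit Types (U V : R -> R -> X -> X) (B : set X).

Definition process_gap U V B (t : R) : \bar R :=
  ereal_sup [set r | exists x tau, [/\ B x, 0 <= tau &
             r = (mdist (U t (t - tau) x) (V t (t - tau) x))%:E]].

Lemma process_gap_ub {U V B} t {x tau} : B x -> 0 <= tau ->
  ((mdist (U t (t - tau) x) (V t (t - tau) x))%:E <= process_gap U V B t)%E.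
Proof. by move=> Bx tau0; apply: ereal_sup_ubound; exists x, tau. Qed.

Lemma process_gapC U V B t : process_gap U V B t = process_gap V U B t.
Proof.
rewrite /process_gap; congr ereal_sup; apply/seteqP.
by split=> _ [x [tau [Bx tau0 ->]]]; exists x, tau; rewrite metric_sym.
Qed.

Lemma hsdist_le_process_gap U V (A C : R -> set X) B t tau e :
  0 <= tau -> U t (t - tau) @` A (t - tau) = A t -> A (t - tau) `<=` B ->
  (process_gap U V B t <= e%:E)%E ->
  (hsdist (A t) (C t) <= hsdist (V t (t - tau)%R @` B) (C t) + e%:E)%E.
Proof.
move=> tau0 invA AB gap_le; rewrite -invA.
apply: le_trans (hsdistSl (image_subset _ AB)) _.
apply: le_hsdist_image => x Bx; rewrite -lee_fin.
exact: le_trans (process_gap_ub t Bx tau0) gap_le.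
Qed.

Lemma hsdist_cvg0_of_process_gap {U V} {A C : R -> set X} {B} :
  (forall t, A t !=set0) ->
  (forall t tau, tau <= t -> U t tau @` A tau = A t) ->
  (forall t, t <= 0 -> A t `<=` B) ->
  (forall t, hsdist (V t (t - s) @` B) (C t) @[s --> +oo] --> 0%E) ->
  process_gap U V B t @[t --> -oo] --> 0%E ->
  hsdist (A t) (C t) @[t --> -oo] --> 0%E.
Proof.
move=> A0 invA AB attC gap0.
apply/cvge0P => [t|e e0]; first exact: hsdist_ge0.
have e20 : 0 < e / 2 by rewrite divr_gt0.
have [b Bb] : B !=set0 by have [a Aa] := A0 0; exists a; apply: (AB 0).
have gap_ge0 t : (0 <= process_gap U V B t)%E.
  by apply: le_trans _ (process_gap_ub t Bb (lexx 0)); rewrite lee_fin mdist_ge0.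
near=> t.
have t_le0 : t <= 0 by near: t; exact: nbhs_ninfty_le.
have [tau [tau0 attC_tau]] : exists tau, 0 <= tau /\
    (hsdist (V t (t - tau)%R @` B) (C t) <= (e / 2)%:E)%E.
  have dist_ge0 s : (0 <= hsdist (V t (t - s)%R @` B) (C t))%E.
    by apply/hsdist_ge0/image_nonempty; exists b.
  have /(cvge0P dist_ge0)/(_ _ e20) attC_e := attC t.
  have [s [s0 hs]] := filter_ex (filterI (nbhs_pinfty_ge (num_real 0)) attC_e).
  by exists s.
rewrite (splitr e) EFinD; apply: le_trans (leeD attC_tau (lexx _)).
apply: hsdist_le_process_gap => //.
- by apply: invA; lra.
- by apply: AB; lra.
- by near: t; move/(cvge0P gap_ge0): gap0; exact.
Unshelve. all: by end_near.
Qed.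

End process_gap.

Theorem proposition2p4 (R : realType) (X : metricType R)
  (U Uinf : R -> R -> X -> X) (A Ainf : R -> set X) (B : set X) :
  complete_space X ->
  is_process U -> is_process Uinf ->
  pullback_attractor U A -> pullback_attractor Uinf Ainf ->
  mbounded B -> (forall t, t <= 0 -> A t `<=` B) ->
  ereal_sup [set r | exists x tau, [/\ B x, 0 <= tau &
             r = (mdist (U t (t - tau) x) (Uinf t (t - tau) x))%:E]] @[t --> -oo] --> 0%E ->
  (hsdist (A t) (Ainf t) @[t --> -oo] --> 0%E) /\
  ((forall t, t <= 0 -> Ainf t `<=` B) ->
     hdist (A t) (Ainf t) @[t --> -oo] --> 0%E).
Proof.
move=> _ _ _ [[compA [invA attA]] _] [[compAi [invAi attAi]] _] bB AB gap0.
have A0 t : A t !=set0 by case: (compA t).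
have Ai0 t : Ainf t !=set0 by case: (compAi t).
have B0 : B !=set0 by case: (A0 0) => a Aa; exists a; apply: (AB 0).
have dist_cvg0 := hsdist_cvg0_of_process_gap A0 invA AB (attAi B B0 bB) gap0.
split=> // AiB.
have gapC0 : process_gap Uinf U B t @[t --> -oo] --> 0%E.
  by under eq_fun do rewrite process_gapC.
have distC_cvg0 := hsdist_cvg0_of_process_gap Ai0 invAi AiB (attA B B0 bB) gapC0.
have dist_ge0 t : (0 <= hsdist (A t) (Ainf t))%E by apply/hsdist_ge0/A0.
have distC_ge0 t : (0 <= hsdist (Ainf t) (A t))%E by apply/hsdist_ge0/Ai0.
exact: cvge0_max dist_ge0 distC_ge0 dist_cvg0 distC_cvg0.
Qed.
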